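(* Let $z\in\mathcal F_\infty$. If $v,w\in\mathcal A_{\mathrm{FPF}}(z)$ and $v<_{\mathcal A}w$, then $\lambda(v)<\lambda(w)$ in the dominance order.
   Context: Let $S_\infty$ be the group of finitely supported permutations of $\mathbb P$, and let $\ell(w)$ be the number of inversions of $w$. Let $\Theta(i)=i-(-1)^i$ and $\mathcal F_\infty=\{w^{-1}\Theta w:w\in S_\infty\}$. Let $\mathcal A_{\mathrm{FPF}}(z)$ be the set of minimal-length $w$ with $z=w^{-1}\Theta w$. Define $<_{\mathcal A}$ on $S_\infty$ as the transitive relation generated by the following rule. Set $v<_{\mathcal A}w$ when the one-line representation of $w^{-1}$ is obtained from that of $v^{-1}$ by replacing a consecutive subsequence $a\,d\,b\,c$, beginning at an odd position and with $a<b<c<d$, by $b\,c\,a\,d$. The code of $w\in S_\infty$ is $c(w)=(c_1,c_2,\dots)$ with $c_i=\#\{j>i:w(j)<w(i)\}$. The shape $\lambda(w)$ is the partition obtained by sorting $c(w)$. *)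

(* Permutations of P = {1,2,...} are encoded as functions
   nat -> nat fixing 0; index 0 is a dummy point. *)
From Stdlib Require Import Relations.
From mathcomp Require Import all_boot.
Set Implicit Arguments. Unset Strict Implicit. Unset Printing Implicit Defensive.

Definition Theta (i : nat) : nat :=
  if i == 0 then 0 else if odd i then i.+1 else i.-1.

Definition fin_perm (w : nat -> nat) : Prop :=
  w 0 = 0 /\ bijective w /\ exists N, forall i, N < i -> w i = i.

Definition fpf_conj (w z : nat -> nat) : Prop :=
  exists winv, cancel w winv /\ cancel winv w /\
    forall i, z i = winv (Theta (w i)).

Definition in_Finf (z : nat -> nat) : Prop :=
  exists w, fin_perm w /\ fpf_conj w z.

Definition inv_upto (n : nat) (w : nat -> nat) : nat :=
  \sum_(1 <= i < n.+1) \sum_(i.+1 <= j < n.+1) (w j < w i : nat).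

Definition inv_len (w : nat -> nat) (k : nat) : Prop :=
  exists N, forall n, N <= n -> inv_upto n w = k.

Definition A_FPF (z v : nat -> nat) : Prop :=
  fin_perm v /\ fpf_conj v z /\
  forall u, fin_perm u -> fpf_conj u z ->
    forall kv ku, inv_len v kv -> inv_len u ku -> kv <= ku.

(* generating step of <_A: the one-line representation of w^{-1} is obtained
   from that of v^{-1} by replacing a d b c at positions i..i+3 (i odd,
   a<b<c<d) by b c a d. *)
Definition A_step (v w : nat -> nat) : Prop :=
  exists (vi wi : nat -> nat) (i : nat),
    [/\ cancel v vi, cancel vi v, cancel w wi & cancel wi w] /\
    odd i /\
    (let a := vi i in let d := vi i.+1 in let b := vi i.+2 in let c := vi i.+3 in
     [/\ a < b, b < c & c < d] /\
     [/\ wi i = b, wi i.+1 = c, wi i.+2 = a & wi i.+3 = d]) /\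
    (forall j, (j < i) || (i.+3 < j) -> wi j = vi j).

Definition ltA (v w : nat -> nat) : Prop := clos_trans (nat -> nat) A_step v w.

Definition code_upto (n : nat) (w : nat -> nat) : seq nat :=
  [seq \sum_(i.+1 <= j < n.+1) (w j < w i : nat) | i <- iota 1 n].

Definition lam_shape (w : nat -> nat) (lam : seq nat) : Prop :=
  exists N, forall n, N <= n ->
    lam = filter (fun x => x != 0) (sort geq (code_upto n w)).

Definition dom_le (lam mu : seq nat) : Prop :=
  sumn lam = sumn mu /\ forall k, sumn (take k lam) <= sumn (take k mu).

Definition dom_lt (lam mu : seq nat) : Prop := dom_le lam mu /\ lam <> mu.

From Stdlib Require Import Relations.
From mathcomp Require Import all_boot zify.
Set Implicit Arguments. Unset Strict Implicit. Unset Printing Implicit Defensive.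

(* Under one generating step of <_A the code changes in three places only: if
   v^{-1} reads a d b c at positions i..i+3, then c_a grows by 2 while c_b and
   c_c drop by 1, and the new values c_b(w), c_c(w) are at most c_a(v).  Moving
   a unit from a part onto a part at least as large raises every prefix sum of
   the sorted sequence (read off the formula
   sum_{j<=k} lambda_j = sum_m min(k, #{parts > m})) and strictly raises the
   sum of squares, which separates the shapes.  Chaining steps gives the claim. *)

Lemma geq_total : total geq.
Proof. by move=> x y; exact: leq_total. Qed.

Lemma geq_trans : transitive geq.
Proof. by move=> y x z /= yx zy; exact: leq_trans zy yx. Qed.

Lemma geq_anti : antisymmetric geq.
Proof. by move=> x y /= /andP[yx xy]; apply/anti_leq/andP. Qed.

Lemma sort_geq_perm s t : perm_eq s t -> sort geq s = sort geq t.
Proof. exact/perm_sortP/geq_anti/geq_trans/geq_total. Qed.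

Lemma sum_nat_ltn x M : \sum_(0 <= m < M) (m < x : nat) = minn x M.
Proof.
elim: M => [|M IH]; first by rewrite big_geq // minn0.
by rewrite big_nat_recr //= IH; lia.
Qed.

Lemma sumn_take_sorted_geq (u : seq nat) M k : sorted geq u -> all (leq^~ M) u ->
  sumn (take k u) = \sum_(0 <= m < M) minn k (count (fun x => m < x) u).
Proof.
elim: u k => [|x u IH] k /=.
  by move=> _ _; rewrite big1 // => m _; rewrite minn0.
move=> x_u /andP[xM uM]; have u_le_x := order_path_min geq_trans x_u.
case: k => [|k] /=; first by rewrite big1 // => m _; rewrite min0n.
rewrite (IH k (path_sorted x_u) uM) -[in LHS](minn_idPl xM) -sum_nat_ltn -big_split /=.
apply: eq_bigr => m _; case: ltnP => [mx | xm]; first by lia.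
rewrite (eq_in_count (a2 := pred0)) ?count_pred0 ?minn0 // => y yu.
by apply/negbTE; rewrite -leqNgt (leq_trans (allP u_le_x y yu)).
Qed.

Lemma sumn_take_sort (s : seq nat) k :
  sumn (take k (sort geq s)) = \sum_(0 <= m < sumn s) minn k (count (fun x => m < x) s).
Proof.
rewrite (sumn_take_sorted_geq (M := sumn s)) ?sort_sorted ?all_sort //; last first.
- by apply/allP=> x xs; rewrite /= sumnE (big_rem x) //= leq_addr.
- exact: geq_total.
have /permP count_sort := permEl (perm_sort geq s).
by apply: eq_bigr => m _; rewrite count_sort.
Qed.

Lemma leq_sum_pair (T : eqType) (r : seq T) (F G : T -> nat) x y :
  uniq r -> x \in r -> y \in r -> x != y ->
  (forall m, m != x -> m != y -> F m = G m) -> F x + F y <= G x + G y ->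
  \sum_(m <- r) F m <= \sum_(m <- r) G m.
Proof.
move=> r_uniq xr yr xy FG le_xy.
have yr' : y \in rem x r by rewrite rem_mem // eq_sym.
rewrite !(big_rem x xr) !(big_rem y yr') /= !addnA leq_add // (eq_big_seq G) //.
move=> m; rewrite mem_rem_uniq ?rem_uniq // inE mem_rem_uniq // inE => /and3P[my mx _]; exact: FG.
Qed.

Lemma sumn_take_sort_transfer x y (t : seq nat) k : y <= x ->
  sumn (take k (sort geq [:: x, y.+1 & t])) <= sumn (take k (sort geq [:: x.+1, y & t])).
Proof.
move=> yx; rewrite !sumn_take_sort /= !addnS !addSn.
have [<- | xy] := eqVneq x y; first by apply: leq_sum => m _; lia.
have count_t : count (fun z => x < z) t <= count (fun z => y < z) t.
  by apply: sub_count => z /=; lia.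
apply: (leq_sum_pair _ _ _ xy) => [||| m mx my | ]; rewrite ?iota_uniq ?mem_index_iota //; lia.
Qed.

Definition sumsq (s : seq nat) : nat := \sum_(x <- s) x ^ 2.

Definition dom_sq_lt (s t : seq nat) : Prop :=
  [/\ sumn s = sumn t,
      forall k, sumn (take k (sort geq s)) <= sumn (take k (sort geq t)) &
      sumsq s < sumsq t].

Lemma dom_sq_lt_trans s t u : dom_sq_lt s t -> dom_sq_lt t u -> dom_sq_lt s u.
Proof.
move=> [st1 st2 st3] [tu1 tu2 tu3]; split; first by rewrite st1.
- by move=> k; exact: leq_trans (st2 k) (tu2 k).
- exact: ltn_trans st3 tu3.
Qed.

Lemma perm_dom_sq_lt s1 s2 t1 t2 :
  perm_eq s1 s2 -> perm_eq t1 t2 -> dom_sq_lt s2 t2 -> dom_sq_lt s1 t1.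
Proof.
move=> ps pt [e le lt]; split.
- by rewrite (perm_sumn ps) (perm_sumn pt).
- by rewrite (sort_geq_perm ps) (sort_geq_perm pt).
- by rewrite /sumsq (perm_big _ ps) (perm_big _ pt).
Qed.

Lemma dom_sq_lt_transfer2 x y z (t : seq nat) : y <= x -> z <= x ->
  dom_sq_lt [:: x, y.+1, z.+1 & t] [:: x.+2, y, z & t].
Proof.
move=> yx zx; split.
- by rewrite /=; lia.
- move=> k; apply: leq_trans (sumn_take_sort_transfer (z.+1 :: t) k yx) _.
  have swap h a b : perm_eq [:: h, a, b & t] [:: h, b, a & t].
    by rewrite perm_cons; apply/permPl; exact: (perm_catCA [:: a] [:: b] t).
  rewrite (sort_geq_perm (swap _ y _)) (sort_geq_perm (swap x.+2 y z)).
  exact: sumn_take_sort_transfer (leqW zx).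
- rewrite /sumsq !big_cons; nia.
Qed.

Lemma perm_rem3 (T : eqType) (r : seq T) a b c :
  a \in r -> b \in r -> c \in r -> b != a -> c != a -> c != b ->
  perm_eq r [:: a, b, c & rem c (rem b (rem a r))].
Proof.
move=> ar br cr ba ca cb.
apply: perm_trans (perm_to_rem ar) _; rewrite perm_cons.
apply: perm_trans (perm_to_rem (rem_mem ba br)) _; rewrite perm_cons.
exact/perm_to_rem/rem_mem/rem_mem.
Qed.

Lemma dom_sq_lt_map (T : eqType) (r : seq T) (f g : T -> nat) a b c :
  uniq r -> a \in r -> b \in r -> c \in r -> b != a -> c != a -> c != b ->
  (forall p, p != a -> p != b -> p != c -> g p = f p) ->
  g a = (f a).+2 -> f b = (g b).+1 -> f c = (g c).+1 -> g b <= f a -> g c <= f a ->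
  dom_sq_lt (map f r) (map g r).
Proof.
move=> r_uniq ar br cr ba ca cb gf ga fb fc gb gc.
have r_rem3 := perm_rem3 ar br cr ba ca cb.
set rest := rem c (rem b (rem a r)) in r_rem3.
have g_rest : map g rest = map f rest.
  apply/eq_in_map => p.
  rewrite mem_rem_uniq ?rem_uniq // inE mem_rem_uniq ?rem_uniq // inE mem_rem_uniq // inE.
  by move=> /and4P[pc pb pa _]; exact: gf.
apply: (perm_dom_sq_lt (perm_map f r_rem3) (perm_map g r_rem3)).
by rewrite /= g_rest ga fb fc; exact: dom_sq_lt_transfer2.
Qed.

Definition partition_of (s : seq nat) : seq nat := [seq x <- sort geq s | x != 0].

Lemma big_filter_neq0 (F : nat -> nat) s : F 0 = 0 ->
  \sum_(x <- [seq x <- s | x != 0]) F x = \sum_(x <- s) F x.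
Proof.
by move=> F0; rewrite big_filter big_mkcond; apply: eq_bigr => x _; case: eqP => // ->.
Qed.

Lemma big_partition_of (F : nat -> nat) s : F 0 = 0 ->
  \sum_(x <- partition_of s) F x = \sum_(x <- s) F x.
Proof. by move=> F0; rewrite big_filter_neq0 // (perm_big _ (permEl (perm_sort geq s))). Qed.

Lemma sumn_take_partition_of s k :
  sumn (take k (partition_of s)) = sumn (take k (sort geq s)).
Proof.
rewrite /partition_of filter_sort; [|exact: geq_total|exact: geq_trans].
rewrite !sumn_take_sort [sumn (filter _ _)]sumnE big_filter_neq0 // -sumnE.
apply: eq_bigr => m _; rewrite count_filter; congr minn.
by apply: eq_count => x /=; case: x => [|x]; rewrite ?andbT ?andbF.
Qed.

Lemma dom_lt_partition_of s t : dom_sq_lt s t -> dom_lt (partition_of s) (partition_of t).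
Proof.
case=> sumn_st take_st sumsq_st; split; first split.
- by rewrite !sumnE !big_partition_of // -!sumnE.
- by move=> k; rewrite !sumn_take_partition_of.
- move=> /(congr1 sumsq); rewrite /sumsq !big_partition_of // => eq_sq.
  by move: sumsq_st; rewrite /sumsq eq_sq ltnn.
Qed.

Definition code_at (n : nat) (w : nat -> nat) (p : nat) : nat :=
  \sum_(p.+1 <= j < n.+1) (w j < w p : nat).

Lemma sum_nat_indicator m n x : m <= x < n -> \sum_(m <= j < n) (j == x : nat) = 1.
Proof. by move=> xmn; rewrite -big_mkcond big_nat1_eq xmn. Qed.

Lemma leq_sum_nat_suffix m p n (F : nat -> nat) : m <= p ->
  \sum_(p <= j < n) F j <= \sum_(m <= j < n) F j.
Proof.
move=> mp; have [pn | np] := leqP p n; last by rewrite big_geq // ltnW.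
by rewrite (big_cat_nat mp pn) leq_addl.
Qed.

Section AStepCode.

Variables (v w vi wi : nat -> nat) (i : nat).
Hypotheses (vK : cancel v vi) (viK : cancel vi v) (wiK : cancel wi w).

Let a := vi i.
Let d := vi i.+1.
Let b := vi i.+2.
Let c := vi i.+3.

Hypotheses (lt_ab : a < b) (lt_bc : b < c) (lt_cd : c < d).
Hypotheses (wi_i : wi i = b) (wi_i1 : wi i.+1 = c) (wi_i2 : wi i.+2 = a) (wi_i3 : wi i.+3 = d).
Hypothesis wi_out : forall j, (j < i) || (i.+3 < j) -> wi j = vi j.

Let v_a : v a = i := viK i.
Let v_b : v b = i.+2 := viK i.+2.
Let v_c : v c = i.+3 := viK i.+3.
Let v_d : v d = i.+1 := viK i.+1.
Let w_a : w a = i.+2. Proof. by rewrite -wi_i2 wiK. Defined.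
Let w_b : w b = i. Proof. by rewrite -wi_i wiK. Defined.
Let w_c : w c = i.+1. Proof. by rewrite -wi_i1 wiK. Defined.
Let w_d : w d = i.+3. Proof. by rewrite -wi_i3 wiK. Defined.

Lemma A_step_cases p :
  (p = a /\ v p = i /\ w p = i.+2) \/ (p = b /\ v p = i.+2 /\ w p = i) \/
  (p = c /\ v p = i.+3 /\ w p = i.+1) \/ (p = d /\ v p = i.+1 /\ w p = i.+3) \/
  ([&& p != a, p != b, p != c & p != d] /\ w p = v p /\ ((v p < i) || (i.+3 < v p))).
Proof.
have vp_pos q : v p = q -> p = vi q by move=> <-; rewrite vK.
have [out | ] := boolP ((v p < i) || (i.+3 < v p)).
  have wp : w p = v p by rewrite -{1}(vK p) -(wi_out out) wiK.
  do 4 right; split; last by split.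
  by apply/and4P; split; apply/eqP => pE; move: out; rewrite pE /a /b /c /d viK; lia.
rewrite negb_or -!leqNgt => /andP[ip pi].
have : v p = i \/ v p = i.+1 \/ v p = i.+2 \/ v p = i.+3 by lia.
case=> [|[|[|]]] vp; have pE := vp_pos _ vp.
- by left; rewrite pE v_a w_a.
- by do 3 right; left; rewrite pE v_d w_d.
- by right; left; rewrite pE v_b w_b.
- by do 2 right; left; rewrite pE v_c w_c.
Qed.

Lemma code_at_w_a n : c <= n -> code_at n w a = (code_at n v a).+2.
Proof.
move=> cn; rewrite /code_at.
have step j : a.+1 <= j < n.+1 -> (w j < w a : nat) = (v j < v a) + (j == b) + (j == c).
  by rewrite w_a v_a => aj; case: (A_step_cases j) => [|[|[|[|]]]]; lia.
by rewrite (eq_big_nat _ _ step) !big_split /= !sum_nat_indicator //; lia.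
Qed.

Lemma code_at_v_b n : d <= n -> code_at n v b = (code_at n w b).+1.
Proof.
move=> dn; rewrite /code_at.
have step j : b.+1 <= j < n.+1 -> (v j < v b : nat) = (w j < w b) + (j == d).
  by rewrite v_b w_b => bj; case: (A_step_cases j) => [|[|[|[|]]]]; lia.
by rewrite (eq_big_nat _ _ step) big_split /= sum_nat_indicator //; lia.
Qed.

Lemma code_at_v_c n : d <= n -> code_at n v c = (code_at n w c).+1.
Proof.
move=> dn; rewrite /code_at.
have step j : c.+1 <= j < n.+1 -> (v j < v c : nat) = (w j < w c) + (j == d).
  by rewrite v_c w_c => cj; case: (A_step_cases j) => [|[|[|[|]]]]; lia.
by rewrite (eq_big_nat _ _ step) big_split /= sum_nat_indicator //; lia.
Qed.

Lemma code_at_w_b_le n : code_at n w b <= code_at n v a.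
Proof.
rewrite /code_at.
have step j : b.+1 <= j < n.+1 -> (w j < w b : nat) = (v j < v a).
  by rewrite w_b v_a => bj; case: (A_step_cases j) => [|[|[|[|]]]]; lia.
by rewrite (eq_big_nat _ _ step) leq_sum_nat_suffix // ltnW.
Qed.

Lemma code_at_w_c_le n : code_at n w c <= code_at n v a.
Proof.
rewrite /code_at.
have step j : c.+1 <= j < n.+1 -> (w j < w c : nat) = (v j < v a).
  by rewrite w_c v_a => cj; case: (A_step_cases j) => [|[|[|[|]]]]; lia.
by rewrite (eq_big_nat _ _ step) leq_sum_nat_suffix //; lia.
Qed.

Lemma code_at_out n p : p != a -> p != b -> p != c -> code_at n w p = code_at n v p.
Proof.
move=> pa pb pc; have [-> | pd] := eqVneq p d.
  apply: eq_big_nat => j dj.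
  by rewrite v_d w_d; case: (A_step_cases j) => [|[|[|[|]]]]; lia.
have [wp out] : w p = v p /\ ((v p < i) || (i.+3 < v p)).
  by case: (A_step_cases p) => [|[|[|[|[]]]]]; lia.
apply: eq_big_nat => j _; rewrite wp.
case: (A_step_cases j) => [[_ [-> ->]]|[[_ [-> ->]]|[[_ [-> ->]]|[[_ [-> ->]]|[_ [-> _]]]]]] //.
all: by clear -out; lia.
Qed.

Lemma A_step_fix0 : v 0 = 0 -> 0 < i -> w 0 = 0.
Proof.
move=> v0 i_gt0; have vi0 : vi 0 = 0 by rewrite -{1}v0 vK.
by rewrite -{1}vi0 -wi_out ?i_gt0 // wiK.
Qed.

Lemma A_step_code_dom n : v 0 = 0 -> 0 < i -> d <= n ->
  dom_sq_lt (code_upto n v) (code_upto n w).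
Proof.
move=> v0 i_gt0 dn.
have a_gt0 : 0 < a by rewrite lt0n; apply: contraTneq i_gt0 => a0; rewrite -v_a a0 v0.
apply: (dom_sq_lt_map (iota_uniq 1 n) _ _ _ _ _ _ (@code_at_out n)
  (code_at_w_a (ltnW (leq_trans lt_cd dn))) (code_at_v_b dn) (code_at_v_c dn)
  (code_at_w_b_le n) (code_at_w_c_le n)).
all: rewrite ?mem_iota; lia.
Qed.

End AStepCode.

Definition code_dom_lt (v w : nat -> nat) : Prop :=
  exists N, forall n, N <= n -> dom_sq_lt (code_upto n v) (code_upto n w).

Lemma code_dom_lt_trans u v w : code_dom_lt u v -> code_dom_lt v w -> code_dom_lt u w.
Proof.
move=> [N1 uv] [N2 vw]; exists (maxn N1 N2) => n.
rewrite geq_max => /andP[N1n N2n]; exact: dom_sq_lt_trans (uv n N1n) (vw n N2n).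
Qed.

Lemma ltA_fix0 v w : ltA v w -> v 0 = 0 -> w 0 = 0.
Proof.
elim=> {v w} [v w [vi [wi [i [[vK _ _ wiK] [i_odd [_ wi_out]]]]]] | u v w _ IHuv _ IHvw] v0.
- exact: A_step_fix0 v0 (odd_gt0 i_odd).
- exact/IHvw/IHuv.
Qed.

Lemma ltA_code_dom_lt v w : ltA v w -> v 0 = 0 -> code_dom_lt v w.
Proof.
elim=> {v w} [v w | u v w uv IHuv _ IHvw u0].
- move=> [vi [wi [i [[vK viK _ wiK] [i_odd [[[ab bc cd] [wi0 wi1 wi2 wi3]] wi_out]]]]]] v0.
  by exists (vi i.+1) => n dn; exact: A_step_code_dom (odd_gt0 i_odd) dn.
- exact: code_dom_lt_trans (IHuv u0) (IHvw (ltA_fix0 uv u0)).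
Qed.

Theorem lemma3p29 (z v w : nat -> nat) :
  in_Finf z -> A_FPF z v -> A_FPF z w -> ltA v w ->
  forall lv lw, lam_shape v lv -> lam_shape w lw -> dom_lt lv lw.
Proof.
move=> _ [[v0 _] _] _ vw lv lw [Nv lvE] [Nw lwE].
have [N vw_dom] := ltA_code_dom_lt vw v0.
pose n := maxn N (maxn Nv Nw).
have /and3P[Nn Nvn Nwn] : [&& N <= n, Nv <= n & Nw <= n] by rewrite /n; lia.
rewrite (lvE n Nvn) (lwE n Nwn); exact: dom_lt_partition_of (vw_dom n Nn).
Qed.
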